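(* Let $L\in\mathcal L_n$. For $k\in[n]$ let $P_k$ be the $n\times n$ permutation matrix with $(P_k)_{i,j}=1$ iff $L_{i,j}=k$. Then $$\sum_{k=1}^n r(P_k)=\frac{n^2(n^2-1)}{12}.$$ The same identity holds when $P_1,\dots,P_n$ are instead the permutation matrices determined by the rows of $L$ (for row $i$, $(P_i)_{j,k}=1$ iff $L_{i,j}=k$) or by the columns of $L$ (for column $j$, $(P_j)_{i,k}=1$ iff $L_{i,j}=k$).
   Context: Let $[n]=\{1,\dots,n\}$. A Latin square of order $n$ is an $n\times n$ array with entries in $[n]$ in which each symbol occurs exactly once in each row and each column; $\mathcal L_n$ is the set of them. For an $n\times n$ matrix $P$, its corner-sum matrix is $\Sigma(P)_{i,j}=\sum_{a\le i,b\le j}P_{a,b}$ for $i,j\in\{0,\dots,n\}$. For a permutation matrix (or alternating sign matrix) $P$ of order $n$, $r(P)$ denotes its rank in the lattice of $n\times n$ alternating sign matrices under the Bruhat order (whose minimum is the identity $I_n$), namely $r(P)=\sum_{0\le i,j\le n}\big(\min(i,j)-\Sigma(P)_{i,j}\big)$. *)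

From mathcomp Require Import all_boot all_order all_algebra.
Set Implicit Arguments. Unset Strict Implicit. Unset Printing Implicit Defensive.
Import Order.TTheory GRing.Theory Num.Theory.
Local Open Scope ring_scope.

(* Symbols [n] = {1..n} are encoded as 'I_n = {0..n-1} (shift by one);
   rows/columns likewise indexed by 'I_n. *)

Definition latin_square (n : nat) (L : 'M['I_n]_n) : Prop :=
  (forall (i k : 'I_n), #|[set j : 'I_n | L i j == k]| = 1%N) /\
  (forall (j k : 'I_n), #|[set i : 'I_n | L i j == k]| = 1%N).

(* Corner-sum matrix: Sigma(P)_{i,j} = sum_{a <= i, b <= j} P_{a,b}
   (1-indexed), for i, j in {0..n}; in 0-indexed form a < i, b < j. *)
Definition corner_sum (n : nat) (P : 'M[int]_n) (i j : nat) : int :=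
  \sum_(a < n | (a < i)%N) \sum_(b < n | (b < j)%N) P a b.

(* Rank in the Bruhat order lattice of ASMs:
   r(P) = sum_{0 <= i,j <= n} (min(i,j) - Sigma(P)_{i,j}). *)
Definition asm_rank (n : nat) (P : 'M[int]_n) : int :=
  \sum_(i < n.+1) \sum_(j < n.+1) ((minn i j)%:Z - corner_sum P i j).

Definition symbol_pm (n : nat) (L : 'M['I_n]_n) (k : 'I_n) : 'M[int]_n :=
  \matrix_(i, j) ((L i j == k) : nat)%:Z.

Definition row_pm (n : nat) (L : 'M['I_n]_n) (i : 'I_n) : 'M[int]_n :=
  \matrix_(j, k) ((L i j == k) : nat)%:Z.

Definition col_pm (n : nat) (L : 'M['I_n]_n) (j : 'I_n) : 'M[int]_n :=
  \matrix_(i, k) ((L i j == k) : nat)%:Z.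

(** If permutation matrices [P_k] (k ranging over a set of size [m]) add up
    to the all-ones matrix [J], then by linearity of corner sums
    [sum_k Sigma(P_k)_{i,j} = Sigma(J)_{i,j} = i j], so
    [sum_k r(P_k) = sum_{i,j <= n} (m min(i,j) - i j)].  The symbol, row and
    column matrices of a Latin square each partition [J] with [m = n], and
    [n sum min(i,j) - sum i j = n^2 (n+1)(2n+1)/6 - n^2 (n+1)^2/4
     = n^2 (n^2 - 1)/12]. *)

From mathcomp Require Import all_boot all_order all_algebra zify.
Import Order.TTheory GRing.Theory Num.Theory.
Local Open Scope ring_scope.

Lemma sum_corner_sum (I : finType) n (F : I -> 'M[int]_n) i j :
  \sum_k corner_sum (F k) i j = corner_sum (\sum_k F k) i j.
Proof.
rewrite /corner_sum exchange_big; apply: eq_bigr => a _.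
rewrite exchange_big; apply: eq_bigr => b _.
by rewrite summxE.
Qed.

Lemma corner_sum_const1 n i j : (i <= n)%N -> (j <= n)%N ->
  corner_sum (const_mx 1 : 'M[int]_n) i j = (i * j)%:R.
Proof.
move=> le_in le_jn; rewrite /corner_sum (big_ord_narrow le_in) /=.
under eq_bigr => a _ do rewrite (big_ord_narrow le_jn) /=.
under eq_bigr do under eq_bigr do rewrite mxE.
by rewrite !sumr_const !card_ord -mulrnA mulnC.
Qed.

Lemma sum_asm_rank (I : finType) n (F : I -> 'M[int]_n) :
  \sum_k F k = const_mx 1 ->
  \sum_k asm_rank (F k) =
  \sum_(i < n.+1) \sum_(j < n.+1) ((#|I| * minn i j)%:R - (i * j)%:R).
Proof.
move=> sumF; rewrite /asm_rank exchange_big; apply: eq_bigr => i _.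
rewrite exchange_big; apply: eq_bigr => j _.
rewrite sumrB sumr_const sum_corner_sum sumF.
rewrite (@corner_sum_const1 n i j (ltn_ord i) (ltn_ord j)).
by congr (_ - _); rewrite natrM mulr_natl natz.
Qed.

Local Open Scope nat_scope.

Lemma sum_ord_id n : 2 * \sum_(i < n.+1) i = n * n.+1.
Proof.
elim: n => [|n IHn]; first by rewrite big_ord1.
by rewrite big_ord_recr /= mulnDr IHn -mulnDl addn2 mulnC.
Qed.

Lemma sum_ord_mul n : 4 * \sum_(i < n.+1) \sum_(j < n.+1) i * j = (n * n.+1) ^ 2.
Proof.
rewrite (eq_bigr (fun i : 'I_n.+1 => i * \sum_(j < n.+1) j)); last first.
  by move=> i _; rewrite big_distrr.
by rewrite -big_distrl /= -sum_ord_id expnMn mulnn.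
Qed.

Lemma sum_ord_min n :
  6 * \sum_(i < n.+1) \sum_(j < n.+1) minn i j = n * n.+1 * (2 * n).+1.
Proof.
elim: n => [|n IHn]; first by rewrite !big_ord1.
have new_col (i : 'I_n.+1) :
    \sum_(j < n.+2) minn i j = \sum_(j < n.+1) minn i j + i.
  by rewrite big_ord_recr /= (minn_idPl (ltnW (ltn_ord i))).
have new_row : \sum_(j < n.+2) minn n.+1 j = \sum_(j < n.+1) j + n.+1.
  rewrite big_ord_recr /= minnn; congr (_ + _).
  by apply: eq_bigr => j _; apply/minn_idPr/ltnW.
rewrite big_ord_recr /= (eq_bigr _ (fun i _ => new_col i)) big_split /= new_row.
have := sum_ord_id n.
move: IHn; set A := \sum_(i < n.+1) _; set S := \sum_(i < n.+1) _.
by clearbody A S; nia.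
Qed.

Local Open Scope ring_scope.

Lemma sum_min_sub_mul n :
  12 * \sum_(i < n.+1) \sum_(j < n.+1) ((n * minn i j)%:R - (i * j)%:R)
  = (n ^ 2 * (n ^ 2 - 1))%:R :> int.
Proof.
under eq_bigr do rewrite sumrB -!natr_sum -big_distrr.
rewrite sumrB -!natr_sum -big_distrr /= !natz.
have := sum_ord_min n; have := sum_ord_mul n.
set A := \sum_(i < n.+1) _; set B := \sum_(i < n.+1) _.
by clearbody A B; nia.
Qed.

Lemma intr_eq_divn (F : numFieldType) (x : int) (d m : nat) :
  (0 < d)%N -> d%:R * x = m%:R -> x%:~R = m%:R / d%:R :> F.
Proof.
move=> d_gt0 /(congr1 (intr : int -> F)); rewrite rmorphM !rmorph_nat /= => <-.
by rewrite mulrAC mulfV ?mul1r // pnatr_eq0 -lt0n.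
Qed.

Lemma sum_indicator (I : finType) (P : pred I) :
  \sum_i (P i : nat)%:Z = #|[set i | P i]|%:Z.
Proof.
rewrite -sum1dep_card -[RHS]natz natr_sum [RHS]big_mkcond.
by apply: eq_bigr => i _; case: (P i).
Qed.

Lemma sum_symbol_pm n (L : 'M['I_n]_n) : \sum_k symbol_pm L k = const_mx 1.
Proof.
apply/matrixP => a b; rewrite summxE mxE; under eq_bigr do rewrite mxE.
rewrite sum_indicator (_ : [set k | L a b == k] = [set L a b]) ?cards1 //.
by apply/setP => k; rewrite !inE eq_sym.
Qed.

Lemma sum_row_pm n (L : 'M['I_n]_n) : latin_square L ->
  \sum_i row_pm L i = const_mx 1.
Proof.
move=> [_ col1]; apply/matrixP => j k; rewrite summxE mxE.
by under eq_bigr do rewrite mxE; rewrite sum_indicator col1.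
Qed.

Lemma sum_col_pm n (L : 'M['I_n]_n) : latin_square L ->
  \sum_j col_pm L j = const_mx 1.
Proof.
move=> [row1 _]; apply/matrixP => i k; rewrite summxE mxE.
by under eq_bigr do rewrite mxE; rewrite sum_indicator row1.
Qed.

Theorem mainTheorem13 (n : nat) (L : 'M['I_n]_n) :
  latin_square L ->
  [/\ ((\sum_(k < n) asm_rank (symbol_pm L k))%:~R : rat)
        = ((n ^ 2 * (n ^ 2 - 1))%N)%:R / 12,
      ((\sum_(i < n) asm_rank (row_pm L i))%:~R : rat)
        = ((n ^ 2 * (n ^ 2 - 1))%N)%:R / 12 &
      ((\sum_(j < n) asm_rank (col_pm L j))%:~R : rat)
        = ((n ^ 2 * (n ^ 2 - 1))%N)%:R / 12].
Proof.
move=> latL.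
have rank_sum (F : 'I_n -> 'M[int]_n) : \sum_k F k = const_mx 1 ->
    ((\sum_k asm_rank (F k))%:~R : rat) = ((n ^ 2 * (n ^ 2 - 1))%N)%:R / 12.
  move=> sumF; apply: intr_eq_divn => //.
  by rewrite sum_asm_rank // card_ord sum_min_sub_mul.
split; apply: rank_sum;
  [exact: sum_symbol_pm | exact: sum_row_pm | exact: sum_col_pm].
Qed.
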